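(* Let $M$ be a monoidal category, $C$ an $M$-actegory and $x\in C$. Then in the bicategory $\mathit{Tamb}$ there are 2-cells $\varepsilon_x:R_x\otimes L_x\Rightarrow C(-,=)$ (in $\mathit{Tamb}_{C,C}$), given by composition $\int^{n}C(c,n\odot x)\times C(n\odot x,c')\to C(c,c')$, and $\eta_x:M(-,=)\Rightarrow L_x\otimes R_x$ (in $\mathit{Tamb}_{M,M}$), given by $M(k,k')\ni h\mapsto h\odot x\in C(k\odot x,k'\odot x)\cong\int^{c\in C}C(k\odot x,c)\times C(c,k'\odot x)$, which are morphisms of Tambara modules and satisfy the triangle identities: the composites $R_x\cong R_x\otimes M(-,=)\xrightarrow{R_x\otimes\eta_x}R_x\otimes L_x\otimes R_x\xrightarrow{\varepsilon_x\otimes R_x}C(-,=)\otimes R_x\cong R_x$ and $L_x\cong M(-,=)\otimes L_x\xrightarrow{\eta_x\otimes L_x}L_x\otimes R_x\otimes L_x\xrightarrow{L_x\otimes\varepsilon_x}L_x\otimes C(-,=)\cong L_x$ are identities (bicategorical associators and unitors being inserted as needed). Thus $R_x$ and $L_x$ are adjoint in $\mathit{Tamb}$. Moreover these structure maps are dinatural in $x$: for every $f:x\to y$ in $C$, $(R_f\otimes L_y);\varepsilon_y=(R_x\otimes L_f);\varepsilon_x$ as 2-cells $R_x\otimes L_y\Rightarrow C(-,=)$, and $\eta_x;(L_x\otimes R_f)=\eta_y;(L_f\otimes R_y)$ as 2-cells $M(-,=)\Rightarrow L_x\otimes R_y$.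
   Context: $(M,\otimes,I,\lambda,a)$ is a monoidal category. An $M$-actegory is a category $C$ with a functor $\odot:M\times C\to C$ and coherent natural isomorphisms $\lambda_x:I\odot x\to x$, $a_{m,n,x}:(m\otimes n)\odot x\to m\odot(n\odot x)$; $M$ is an $M$-actegory via $\otimes$. Composition is diagrammatic: $f;g$ means $f$ then $g$. A Tambara module $P\in\mathit{Tamb}_{C,D}$ ($C,D$ $M$-actegories) is a functor $P:C^{op}\times D\to\mathrm{Set}$ with strength maps $P(c,d)\to P(m\odot c,m\odot d)$ natural in $c,d$, (di)natural in $m$, compatible with unitors/associators; morphisms (2-cells) are strength-preserving natural transformations. $\mathit{Tamb}$ is the bicategory of $M$-actegories, with hom-categories $\mathit{Tamb}_{C,D}$, identity 1-cells the hom-profunctors $C(-,=)$, and composition $(P\otimes Q)(c,e)=\int^{d}P(c,d)\times Q(d,e)$ for $P\in\mathit{Tamb}_{C,D},Q\in\mathit{Tamb}_{D,E}$. For $x\in C$, $R_x\in\mathit{Tamb}_{C,M}$ is $(c,n)\mapsto C(c,n\odot x)$ with strength $h\mapsto(m\odot h);a^{-1}_{m,n,x}$, and $L_x\in\mathit{Tamb}_{M,C}$ is $(n,c)\mapsto C(n\odot x,c)$ with strength $h\mapsto a_{m,n,x};(m\odot h)$. For $f:x\to y$ in $C$, $R_f:R_x\Rightarrow R_y$ postcomposes with $n\odot f$ and $L_f:L_y\Rightarrow L_x$ precomposes with $n\odot f$. *)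

(* elementary category theory set up by hand.
   Composition is diagrammatic:  f ;; g  means f then g. *)
From Stdlib Require Import ClassicalEpsilon.

Record Cat := {
  ob :> Type;
  hom : ob -> ob -> Type;
  cid : forall a, hom a a;
  comp : forall a b c, hom a b -> hom b c -> hom a c;
  comp_id_l : forall a b (f : hom a b), comp _ _ _ (cid a) f = f;
  comp_id_r : forall a b (f : hom a b), comp _ _ _ f (cid b) = f;
  comp_assoc : forall a b c d (f : hom a b) (g : hom b c) (h : hom c d),
      comp _ _ _ (comp _ _ _ f g) h = comp _ _ _ f (comp _ _ _ g h)
}.
Arguments hom {_} _ _.
Arguments cid {_} _.
Arguments comp {_ _ _ _} _ _.
Notation "f ;; g" := (comp f g) (at level 40, left associativity).

Record MonCat := {
  mcat :> Cat;
  tens : mcat -> mcat -> mcat;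
  tens_hom : forall (a a' b b' : mcat), hom a a' -> hom b b' -> hom (tens a b) (tens a' b');
  tens_id : forall a b, tens_hom _ _ _ _ (cid a) (cid b) = cid (tens a b);
  tens_comp : forall a a' a'' b b' b'' (f : hom a a') (f' : hom a' a'')
                     (g : hom b b') (g' : hom b' b''),
      tens_hom _ _ _ _ (f ;; f') (g ;; g') = tens_hom _ _ _ _ f g ;; tens_hom _ _ _ _ f' g';
  munit : mcat;
  mlam : forall a, hom (tens munit a) a;
  mlam_inv : forall a, hom a (tens munit a);
  mlam_iso1 : forall a, mlam a ;; mlam_inv a = cid _;
  mlam_iso2 : forall a, mlam_inv a ;; mlam a = cid _;
  mlam_nat : forall a b (f : hom a b),
      tens_hom _ _ _ _ (cid munit) f ;; mlam b = mlam a ;; f;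
  mrho : forall a, hom (tens a munit) a;
  mrho_inv : forall a, hom a (tens a munit);
  mrho_iso1 : forall a, mrho a ;; mrho_inv a = cid _;
  mrho_iso2 : forall a, mrho_inv a ;; mrho a = cid _;
  mrho_nat : forall a b (f : hom a b),
      tens_hom _ _ _ _ f (cid munit) ;; mrho b = mrho a ;; f;
  massoc : forall a b c, hom (tens (tens a b) c) (tens a (tens b c));
  massoc_inv : forall a b c, hom (tens a (tens b c)) (tens (tens a b) c);
  massoc_iso1 : forall a b c, massoc a b c ;; massoc_inv a b c = cid _;
  massoc_iso2 : forall a b c, massoc_inv a b c ;; massoc a b c = cid _;
  massoc_nat : forall a a' b b' c c' (f : hom a a') (g : hom b b') (h : hom c c'),
      tens_hom _ _ _ _ (tens_hom _ _ _ _ f g) h ;; massoc a' b' c'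
      = massoc a b c ;; tens_hom _ _ _ _ f (tens_hom _ _ _ _ g h);
  pentagon : forall a b c d,
      massoc (tens a b) c d ;; massoc a b (tens c d)
      = tens_hom _ _ _ _ (massoc a b c) (cid d) ;; massoc a (tens b c) d
        ;; tens_hom _ _ _ _ (cid a) (massoc b c d);
  triangle : forall a b,
      massoc a munit b ;; tens_hom _ _ _ _ (cid a) (mlam b)
      = tens_hom _ _ _ _ (mrho a) (cid b)
}.
Arguments tens {_} _ _.
Arguments tens_hom {_ _ _ _ _} _ _.
Arguments munit {_}.
Arguments mlam {_} _.
Arguments mrho {_} _.
Arguments massoc {_} _ _ _.

Record ActData (M : MonCat) := {
  acat :> Cat;
  act : M -> acat -> acat;
  act_hom : forall (m m' : M) (x x' : acat),
      hom m m' -> hom x x' -> hom (act m x) (act m' x');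
  act_id : forall m x, act_hom _ _ _ _ (cid m) (cid x) = cid (act m x);
  act_comp : forall (m m' m'' : M) (x x' x'' : acat) (u : hom m m') (u' : hom m' m'')
                    (f : hom x x') (f' : hom x' x''),
      act_hom _ _ _ _ (u ;; u') (f ;; f') = act_hom _ _ _ _ u f ;; act_hom _ _ _ _ u' f';
  alam : forall x, hom (act munit x) x;
  alam_inv : forall x, hom x (act munit x);
  alam_iso1 : forall x, alam x ;; alam_inv x = cid _;
  alam_iso2 : forall x, alam_inv x ;; alam x = cid _;
  alam_nat : forall x y (f : hom x y),
      act_hom _ _ _ _ (cid munit) f ;; alam y = alam x ;; f;
  aassoc : forall m n x, hom (act (tens m n) x) (act m (act n x));
  aassoc_inv : forall m n x, hom (act m (act n x)) (act (tens m n) x);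
  aassoc_iso1 : forall m n x, aassoc m n x ;; aassoc_inv m n x = cid _;
  aassoc_iso2 : forall m n x, aassoc_inv m n x ;; aassoc m n x = cid _;
  aassoc_nat : forall (m m' n n' : M) (x x' : acat) (u : hom m m') (v : hom n n') (f : hom x x'),
      act_hom _ _ _ _ (tens_hom u v) f ;; aassoc m' n' x'
      = aassoc m n x ;; act_hom _ _ _ _ u (act_hom _ _ _ _ v f)
}.
Arguments acat {_} _.
Arguments act {_ _} _ _.
Arguments act_hom {_ _ _ _ _ _} _ _.
Arguments alam {_ _} _.
Arguments alam_inv {_ _} _.
Arguments aassoc {_ _} _ _ _.
Arguments aassoc_inv {_ _} _ _ _.

Definition ActCoherent {M : MonCat} (A : ActData M) : Prop :=
  (forall (m n p : M) (x : A),
      aassoc (tens m n) p x ;; aassoc m n (act p x)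
      = act_hom (massoc m n p) (cid x) ;; aassoc m (tens n p) x
        ;; act_hom (cid m) (aassoc n p x)) /\
  (forall (m : M) (x : A),
      aassoc m munit x ;; act_hom (cid m) (alam x) = act_hom (mrho m) (cid x)) /\
  (forall (m : M) (x : A),
      aassoc munit m x ;; alam (act m x) = act_hom (mlam m) (cid x)).

Definition selfAct (M : MonCat) : ActData M := {|
  acat := mcat M;
  act := @tens M;
  act_hom := @tens_hom M;
  act_id := tens_id M;
  act_comp := tens_comp M;
  alam := @mlam M;
  alam_inv := mlam_inv M;
  alam_iso1 := mlam_iso1 M;
  alam_iso2 := mlam_iso2 M;
  alam_nat := mlam_nat M;
  aassoc := @massoc M;
  aassoc_inv := massoc_inv M;
  aassoc_iso1 := massoc_iso1 M;
  aassoc_iso2 := massoc_iso2 M;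
  aassoc_nat := massoc_nat M
|}.

Record Prof {M : MonCat} (A B : ActData M) := {
  pob :> A -> B -> Type;
  pmap : forall (c c' : A) (d d' : B), hom c' c -> hom d d' -> pob c d -> pob c' d';
  pstr : forall (m : M) (c : A) (d : B), pob c d -> pob (act m c) (act m d)
}.
Arguments pob {_ _ _} _ _ _.
Arguments pmap {_ _ _} _ {_ _ _ _} _ _ _.
Arguments pstr {_ _ _} _ _ {_ _} _.

Definition IsTamb {M : MonCat} {A B : ActData M} (P : Prof A B) : Prop :=
  (forall c d (p : P c d), pmap P (cid c) (cid d) p = p) /\
  (forall (c c1 c2 : A) (d d1 d2 : B) (f1 : hom c1 c) (f2 : hom c2 c1)
          (g1 : hom d d1) (g2 : hom d1 d2) (p : P c d),
      pmap P f2 g2 (pmap P f1 g1 p) = pmap P (f2 ;; f1) (g1 ;; g2) p) /\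
  (forall (m : M) (c c' : A) (d d' : B) (f : hom c' c) (g : hom d d') (p : P c d),
      pstr P m (pmap P f g p) = pmap P (act_hom (cid m) f) (act_hom (cid m) g) (pstr P m p)) /\
  (forall (m m' : M) (u : hom m m') (c : A) (d : B) (p : P c d),
      pmap P (cid (act m c)) (act_hom u (cid d)) (pstr P m p)
      = pmap P (act_hom u (cid c)) (cid (act m' d)) (pstr P m' p)) /\
  (forall c d (p : P c d), pmap P (alam_inv c) (alam d) (pstr P munit p) = p) /\
  (forall (m n : M) c d (p : P c d),
      pstr P m (pstr P n p) = pmap P (aassoc_inv m n c) (aassoc m n d) (pstr P (tens m n) p)).

Definition IsTambMor {M : MonCat} {A B : ActData M} (P Q : Prof A B)
    (al : forall c d, P c d -> Q c d) : Prop :=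
  (forall (c c' : A) (d d' : B) (f : hom c' c) (g : hom d d') (p : P c d),
      al c' d' (pmap P f g p) = pmap Q f g (al c d p)) /\
  (forall (m : M) c d (p : P c d), al _ _ (pstr P m p) = pstr Q m (al c d p)).

Inductive eqclos {X : Type} (R : X -> X -> Prop) : X -> X -> Prop :=
| ec_base : forall x y, R x y -> eqclos R x y
| ec_refl : forall x, eqclos R x x
| ec_sym : forall x y, eqclos R x y -> eqclos R y x
| ec_trans : forall x y z, eqclos R x y -> eqclos R y z -> eqclos R x z.

Definition quot {X : Type} (R : X -> X -> Prop) : Type :=
  { S : X -> Prop | exists x, S = eqclos R x }.
Definition cls {X : Type} (R : X -> X -> Prop) (x : X) : quot R :=
  exist _ (eqclos R x) (ex_intro _ x eq_refl).
Definition repr {X : Type} {R : X -> X -> Prop} (q : quot R) : X :=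
  proj1_sig (constructive_indefinite_description _ (proj2_sig q)).

(* Composition of profunctors: (P ⊗ Q)(c,e) = ∫^d P(c,d) × Q(d,e).     *)
Section Compose.
Context {M : MonCat} {A B E : ActData M} (P : Prof A B) (Q : Prof B E).

Definition ctr (c : A) (e : E) : Type := { d : B & (P c d * Q d e)%type }.

Inductive coend_rel (c : A) (e : E) : ctr c e -> ctr c e -> Prop :=
| cr_intro : forall (d d' : B) (g : hom d d') (p : P c d) (q : Q d' e),
    coend_rel c e (existT _ d' (pmap P (cid c) g p, q))
                  (existT _ d (p, pmap Q g (cid e) q)).

Definition coend (c : A) (e : E) : Type := quot (coend_rel c e).

Definition cc {c : A} {e : E} (d : B) (p : P c d) (q : Q d e) : coend c e :=
  cls (coend_rel c e) (existT _ d (p, q)).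

Definition tcomp : Prof A E := {|
  pob := coend;
  pmap := fun c c' e e' f h z =>
    let t := repr z in
    cc (projT1 t) (pmap P f (cid _) (fst (projT2 t))) (pmap Q (cid _) h (snd (projT2 t)));
  pstr := fun m c e z =>
    let t := repr z in
    cc (act m (projT1 t)) (pstr P m (fst (projT2 t))) (pstr Q m (snd (projT2 t)))
|}.
End Compose.
Arguments cc {_ _ _ _} _ _ {_ _} _ _ _.

Notation "P <o> Q" := (tcomp P Q) (at level 35, right associativity).

(* identity 1-cell: the hom-profunctor C(-,=) *)
Definition HomP {M : MonCat} (A : ActData M) : Prof A A := {|
  pob := fun c d => hom c d;
  pmap := fun c c' d d' f g h => f ;; h ;; g;
  pstr := fun m c d h => act_hom (cid m) h
|}.

Section BicatOps.
Context {M : MonCat}.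

Definition whiskR {A B E : ActData M} {P P' : Prof A B}
    (al : forall c d, P c d -> P' c d) (Q : Prof B E)
    : forall c e, (P <o> Q) c e -> (P' <o> Q) c e :=
  fun c e z => let t := repr z in
    cc P' Q (projT1 t) (al _ _ (fst (projT2 t))) (snd (projT2 t)).

Definition whiskL {A B E : ActData M} (P : Prof A B) {Q Q' : Prof B E}
    (be : forall d e, Q d e -> Q' d e)
    : forall c e, (P <o> Q) c e -> (P <o> Q') c e :=
  fun c e z => let t := repr z in
    cc P Q' (projT1 t) (fst (projT2 t)) (be _ _ (snd (projT2 t))).

Definition assocT {A B D E : ActData M} (P : Prof A B) (Q : Prof B D) (S : Prof D E)
    : forall c f, ((P <o> Q) <o> S) c f -> (P <o> (Q <o> S)) c f :=
  fun c f z => let t := repr z in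
    let u := repr (fst (projT2 t)) in
    cc P (Q <o> S) (projT1 u) (fst (projT2 u))
       (cc Q S (projT1 t) (snd (projT2 u)) (snd (projT2 t))).

Definition assocT_inv {A B D E : ActData M} (P : Prof A B) (Q : Prof B D) (S : Prof D E)
    : forall c f, (P <o> (Q <o> S)) c f -> ((P <o> Q) <o> S) c f :=
  fun c f z => let t := repr z in
    let u := repr (snd (projT2 t)) in
    cc (P <o> Q) S (projT1 u)
       (cc P Q (projT1 t) (fst (projT2 t)) (fst (projT2 u))) (snd (projT2 u)).

Definition lunitT {A B : ActData M} (P : Prof A B)
    : forall c d, (HomP A <o> P) c d -> P c d :=
  fun c d z => let t := repr z in pmap P (fst (projT2 t)) (cid d) (snd (projT2 t)).
Definition lunitT_inv {A B : ActData M} (P : Prof A B)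
    : forall c d, P c d -> (HomP A <o> P) c d :=
  fun c d p => cc (HomP A) P c (cid c) p.

Definition runitT {A B : ActData M} (P : Prof A B)
    : forall c d, (P <o> HomP B) c d -> P c d :=
  fun c d z => let t := repr z in pmap P (cid c) (snd (projT2 t)) (fst (projT2 t)).
Definition runitT_inv {A B : ActData M} (P : Prof A B)
    : forall c d, P c d -> (P <o> HomP B) c d :=
  fun c d p => cc P (HomP B) d p (cid d).
End BicatOps.

Section RL.
Context {M : MonCat} (C : ActData M).

Definition Rx (x : C) : Prof C (selfAct M) := @Build_Prof M C (selfAct M)
  (fun (c : C) (n : M) => hom c (act n x))
  (fun (c c' : C) (n n' : M) (f : hom c' c) (g : hom n n') (h : hom c (act n x)) =>
            f ;; h ;; act_hom g (cid x))
  (fun (m : M) (c : C) (n : M) (h : hom c (act n x)) =>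
            act_hom (cid m) h ;; aassoc_inv m n x).

Definition Lx (x : C) : Prof (selfAct M) C := @Build_Prof M (selfAct M) C
  (fun (n : M) (c : C) => hom (act n x) c)
  (fun (n n' : M) (c c' : C) (g : hom n' n) (f : hom c c') (h : hom (act n x) c) =>
            act_hom g (cid x) ;; h ;; f)
  (fun (m n : M) (c : C) (h : hom (act n x) c) =>
            aassoc m n x ;; act_hom (cid m) h).

Definition Rf {x y : C} (f : hom x y) : forall c n, Rx x c n -> Rx y c n :=
  fun c n h => h ;; act_hom (cid n) f.
Definition Lf {x y : C} (f : hom x y) : forall n c, Lx y n c -> Lx x n c :=
  fun n c h => act_hom (cid n) f ;; h.
End RL.

(* Proof idea: every whiskering, unitor and associator of Tamb, and the
   action and strength of a composite, is computed on generators [n, h, k] of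
   the coends, which are identified only along the sliding relation.  On
   generators ε_x is composition and η_x is h ↦ h⊙x, so the triangle identities
   reduce to h ;; (n⊙1_x) = h in C, dinaturality to the interchange law of ⊙,
   and preservation of strength to a ; a⁻¹ = 1 and naturality of a. *)

From Stdlib Require Import ClassicalEpsilon ProofIrrelevance FunctionalExtensionality
  PropExtensionality.

Section Quotient.
Context {X : Type} (R : X -> X -> Prop).

Lemma cls_eq (a b : X) : eqclos R a b -> cls R a = cls R b.
Proof.
  intros Hab. apply subset_eq_compat.
  extensionality z. apply propositional_extensionality. split; intro Hz.
  - exact (ec_trans R _ _ _ (ec_sym R _ _ Hab) Hz).
  - exact (ec_trans R _ _ _ Hab Hz).
Qed.

Lemma cls_repr (q : quot R) : cls R (repr q) = q.
Proof.
  destruct q as [S HS]. unfold repr, cls; simpl.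
  destruct (constructive_indefinite_description _ _) as [x Hx]; simpl.
  apply subset_eq_compat. symmetry. exact Hx.
Qed.

Lemma quot_ind (Pr : quot R -> Prop) : (forall x, Pr (cls R x)) -> forall q, Pr q.
Proof. intros H q. rewrite <- (cls_repr q). apply H. Qed.

Lemma eqclos_repr_cls (x : X) : eqclos R (repr (cls R x)) x.
Proof.
  assert (E : eqclos R (repr (cls R x)) = eqclos R x)
    by exact (f_equal (@proj1_sig _ _) (cls_repr (cls R x))).
  rewrite E. apply ec_refl.
Qed.

Lemma repr_cls_lift {Y : Type} (F : X -> Y) :
  (forall a b, R a b -> F a = F b) -> forall x, F (repr (cls R x)) = F x.
Proof.
  intros HF x.
  induction (eqclos_repr_cls x) as [a b Hab | | a b _ IH | a b c _ IH1 _ IH2].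
  - exact (HF a b Hab).
  - reflexivity.
  - symmetry. exact IH.
  - congruence.
Qed.
End Quotient.

Section Coend.
Context {M : MonCat} {A B E : ActData M} (P : Prof A B) (Q : Prof B E).

Lemma cc_slide (c : A) (e : E) (d d' : B) (g : hom d d') (p : P c d) (q : Q d' e) :
  cc P Q d' (pmap P (cid c) g p) q = cc P Q d p (pmap Q g (cid e) q).
Proof. apply cls_eq, ec_base. constructor. Qed.

Lemma coend_ind (c : A) (e : E) (Pr : (P <o> Q) c e -> Prop) :
  (forall d p q, Pr (cc P Q d p q)) -> forall z, Pr z.
Proof. intros H. apply quot_ind. intros [d [p q]]. apply H. Qed.

Lemma repr_cc_lift {Y : Type} (c : A) (e : E) (F : ctr P Q c e -> Y) :
  (forall d d' (g : hom d d') p q,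
      F (existT _ d' (pmap P (cid c) g p, q)) = F (existT _ d (p, pmap Q g (cid e) q))) ->
  forall d p q, F (repr (cc P Q d p q)) = F (existT _ d (p, q)).
Proof.
  intros HF d p q. apply repr_cls_lift. intros a b []. apply HF.
Qed.
End Coend.

(* Replaces the leftmost [repr (cc P Q d p q)] of the left-hand side by the
   representative (d, p, q); the first subgoal is compatibility of the
   surrounding term with the coend relation. *)
Ltac coend_reduce :=
  lazymatch goal with |- ?L = _ =>
  lazymatch L with context [repr (cc ?P ?Q ?d ?p ?q)] =>
    let L' := eval pattern (repr (cc P Q d p q)) in L in
    lazymatch L' with ?F _ =>
      refine (eq_trans (repr_cc_lift P Q _ _ F _ d p q) _);
      cbn beta; cbn [projT1 projT2 fst snd]
    end end end.

Definition IsProfunctor {M : MonCat} {A B : ActData M} (P : Prof A B) : Prop :=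
  (forall c d (p : P c d), pmap P (cid c) (cid d) p = p) /\
  (forall (c c1 c2 : A) (d d1 d2 : B) (f1 : hom c1 c) (f2 : hom c2 c1)
          (g1 : hom d d1) (g2 : hom d1 d2) (p : P c d),
      pmap P f2 g2 (pmap P f1 g1 p) = pmap P (f2 ;; f1) (g1 ;; g2) p).

Definition IsStrengthNat {M : MonCat} {A B : ActData M} (P : Prof A B) : Prop :=
  forall (m : M) (c c' : A) (d d' : B) (f : hom c' c) (g : hom d d') (p : P c d),
    pstr P m (pmap P f g p) = pmap P (act_hom (cid m) f) (act_hom (cid m) g) (pstr P m p).

Ltac simpl_cat := repeat progress rewrite ?comp_id_l, ?comp_id_r, ?comp_assoc, ?act_id.

Section Bicategory.
Context {M : MonCat}.

Lemma pmap_cc {A B E : ActData M} (P : Prof A B) (Q : Prof B E)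
    (HP : IsProfunctor P) (HQ : IsProfunctor Q)
    c c' e e' (f : hom c' c) (h : hom e e') d (p : P c d) (q : Q d e) :
  pmap (P <o> Q) f h (cc P Q d p q) = cc P Q d (pmap P f (cid d) p) (pmap Q (cid d) h q).
Proof.
  destruct HP as [_ HP], HQ as [_ HQ]. cbn [pmap tcomp]. coend_reduce; [|reflexivity].
  intros d0 d' g p0 q0. rewrite !HP, !HQ. simpl_cat.
  assert (Ep : pmap P f g p0 = pmap P (cid c') g (pmap P f (cid _) p0))
    by (rewrite HP; simpl_cat; reflexivity).
  assert (Eq : pmap Q g h q0 = pmap Q g (cid e') (pmap Q (cid _) h q0))
    by (rewrite HQ; simpl_cat; reflexivity).
  rewrite Ep, Eq. apply cc_slide.
Qed.

Lemma pstr_cc {A B E : ActData M} (P : Prof A B) (Q : Prof B E)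
    (HP : IsStrengthNat P) (HQ : IsStrengthNat Q) m c e d (p : P c d) (q : Q d e) :
  pstr (P <o> Q) m (cc P Q d p q) = cc P Q (act m d) (pstr P m p) (pstr Q m q).
Proof.
  cbn [pstr tcomp]. coend_reduce; [|reflexivity].
  intros. rewrite HP, HQ, !act_id. apply cc_slide.
Qed.

Lemma whiskL_cc {A B E : ActData M} (P : Prof A B) {Q Q' : Prof B E}
    (be : forall d e, Q d e -> Q' d e)
    (Hbe : forall (d d' : B) (e e' : E) (f : hom d' d) (g : hom e e') (q : Q d e),
        be d' e' (pmap Q f g q) = pmap Q' f g (be d e q))
    c e d (p : P c d) (q : Q d e) :
  whiskL P be c e (cc P Q d p q) = cc P Q' d p (be d e q).
Proof.
  unfold whiskL. coend_reduce; [|reflexivity].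
  intros. rewrite Hbe. apply cc_slide.
Qed.

Lemma whiskR_cc {A B E : ActData M} {P P' : Prof A B} (Q : Prof B E)
    (al : forall c d, P c d -> P' c d)
    (Hal : forall (c c' : A) (d d' : B) (f : hom c' c) (g : hom d d') (p : P c d),
        al c' d' (pmap P f g p) = pmap P' f g (al c d p))
    c e d (p : P c d) (q : Q d e) :
  whiskR al Q c e (cc P Q d p q) = cc P' Q d (al c d p) q.
Proof.
  unfold whiskR. coend_reduce; [|reflexivity].
  intros. rewrite Hal. apply cc_slide.
Qed.

Lemma lunitT_cc {A B : ActData M} (P : Prof A B) (HP : IsProfunctor P)
    c e d (f : hom c d) (p : P d e) :
  lunitT P c e (cc (HomP A) P d f p) = pmap P f (cid e) p.
Proof.
  destruct HP as [_ HP]. unfold lunitT. coend_reduce; [|reflexivity].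
  intros. cbn [pmap HomP]. rewrite HP. simpl_cat. reflexivity.
Qed.

Lemma runitT_cc {A B : ActData M} (P : Prof A B) (HP : IsProfunctor P)
    c e d (p : P c d) (g : hom d e) :
  runitT P c e (cc P (HomP B) d p g) = pmap P (cid c) g p.
Proof.
  destruct HP as [_ HP]. unfold runitT. coend_reduce; [|reflexivity].
  intros. cbn [pmap HomP]. rewrite HP. simpl_cat. reflexivity.
Qed.

Section Associator.
Context {A B D E : ActData M} (P : Prof A B) (Q : Prof B D) (S : Prof D E).
Hypotheses (HP : IsProfunctor P) (HQ : IsProfunctor Q) (HS : IsProfunctor S).

Lemma cc_slide_inner_l c f d (p : P c d) e e' (g : hom e e') (q : Q d e) (s : S e' f) :
  cc (P <o> Q) S e' (cc P Q d p (pmap Q (cid d) g q)) s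
  = cc (P <o> Q) S e (cc P Q d p q) (pmap S g (cid f) s).
Proof.
  rewrite <- cc_slide, pmap_cc by assumption.
  destruct HP as [HP1 _]. rewrite HP1. reflexivity.
Qed.

Lemma cc_slide_inner_r c f d d' (g : hom d d') (p : P c d) e (q : Q d' e) (s : S e f) :
  cc P (Q <o> S) d' (pmap P (cid c) g p) (cc Q S e q s)
  = cc P (Q <o> S) d p (cc Q S e (pmap Q g (cid e) q) s).
Proof.
  rewrite cc_slide, pmap_cc by assumption.
  destruct HS as [HS1 _]. rewrite HS1. reflexivity.
Qed.

Lemma assocT_inv_cc c f d (p : P c d) d' (q : Q d d') (s : S d' f) :
  assocT_inv P Q S c f (cc P (Q <o> S) d p (cc Q S d' q s))
  = cc (P <o> Q) S d' (cc P Q d p q) s.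
Proof.
  unfold assocT_inv. coend_reduce.
  - intros d1 d2 g p1 w. revert w. apply coend_ind. intros e q1 s1.
    rewrite pmap_cc, (proj1 HS) by assumption.
    coend_reduce; [intros; apply cc_slide_inner_l|]. symmetry.
    coend_reduce; [intros; apply cc_slide_inner_l|]. symmetry.
    f_equal. apply cc_slide.
  - coend_reduce; [intros; apply cc_slide_inner_l | reflexivity].
Qed.

Lemma assocT_cc c f d (p : P c d) d' (q : Q d d') (s : S d' f) :
  assocT P Q S c f (cc (P <o> Q) S d' (cc P Q d p q) s)
  = cc P (Q <o> S) d p (cc Q S d' q s).
Proof.
  unfold assocT. coend_reduce.
  - intros d1 d2 g w s1. revert w. apply coend_ind. intros e p1 q1.
    rewrite pmap_cc, (proj1 HP) by assumption.
    coend_reduce; [intros; apply cc_slide_inner_r|]. symmetry.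
    coend_reduce; [intros; apply cc_slide_inner_r|]. symmetry.
    f_equal. apply cc_slide.
  - coend_reduce; [intros; apply cc_slide_inner_r | reflexivity].
Qed.
End Associator.
End Bicategory.

Section Actegory.
Context {M : MonCat} {A : ActData M}.

Lemma act_hom_comp_l (m m' m'' : M) (x : A) (u : hom m m') (u' : hom m' m'') :
  act_hom (u ;; u') (cid x) = act_hom u (cid x) ;; act_hom u' (cid x).
Proof. rewrite <- act_comp, comp_id_l. reflexivity. Qed.

Lemma act_hom_comp_r (m : M) (x x' x'' : A) (f : hom x x') (f' : hom x' x'') :
  act_hom (cid m) (f ;; f') = act_hom (cid m) f ;; act_hom (cid m) f'.
Proof. rewrite <- act_comp, comp_id_l. reflexivity. Qed.

Lemma act_hom_interchange (m m' : M) (x x' : A) (u : hom m m') (f : hom x x') :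
  act_hom u (cid x) ;; act_hom (cid m') f = act_hom (cid m) f ;; act_hom u (cid x').
Proof. rewrite <- !act_comp, !comp_id_l, !comp_id_r. reflexivity. Qed.

Lemma aassoc_inv_nat (m m' n n' : M) (x x' : A) (u : hom m m') (v : hom n n') (f : hom x x') :
  aassoc_inv m n x ;; act_hom (tens_hom u v) f
  = act_hom u (act_hom v f) ;; aassoc_inv m' n' x'.
Proof.
  rewrite <- (comp_id_r _ _ _ (aassoc_inv m n x ;; _)), <- (aassoc_iso1 _ A m' n' x').
  rewrite comp_assoc, <- (comp_assoc _ _ _ _ _ (act_hom _ f)), aassoc_nat.
  rewrite <- !comp_assoc, aassoc_iso2, comp_id_l. reflexivity.
Qed.
End Actegory.

Section TambaraAdjunction.
Context {M : MonCat} (C : ActData M).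

Lemma IsProfunctor_Rx (x : C) : IsProfunctor (Rx C x).
Proof. split; intros; cbn; [|rewrite act_hom_comp_l]; simpl_cat; reflexivity. Qed.

Lemma IsProfunctor_Lx (x : C) : IsProfunctor (Lx C x).
Proof. split; intros; cbn; [|rewrite act_hom_comp_l]; simpl_cat; reflexivity. Qed.

Lemma IsStrengthNat_Rx (x : C) : IsStrengthNat (Rx C x).
Proof.
  intros m c c' n n' f g h. cbn. rewrite !act_hom_comp_r. simpl_cat.
  rewrite aassoc_inv_nat. reflexivity.
Qed.

Lemma IsStrengthNat_Lx (x : C) : IsStrengthNat (Lx C x).
Proof.
  intros m n n' c c' f g h. cbn. rewrite !act_hom_comp_r.
  rewrite <- (comp_assoc _ _ _ _ _ (act_hom (tens_hom _ _) _)), aassoc_nat. simpl_cat.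
  reflexivity.
Qed.

Definition eps (x c c' : C) (z : (Rx C x <o> Lx C x) c c') : HomP C c c' :=
  let t := repr z in (fst (projT2 t) : hom c (act (projT1 t) x)) ;; snd (projT2 t).

Definition eta (x : C) (k k' : M) (h : HomP (selfAct M) k k') : (Lx C x <o> Rx C x) k k' :=
  cc (Lx C x) (Rx C x) (act k' x) (act_hom (h : hom k k') (cid x)) (cid (act k' x)).

Lemma eps_cc (x c c' : C) (n : M) (h : hom c (act n x)) (k : hom (act n x) c') :
  eps x c c' (cc (Rx C x) (Lx C x) n h k) = h ;; k.
Proof.
  unfold eps. coend_reduce; [|reflexivity].
  intros. cbn. simpl_cat. reflexivity.
Qed.

Lemma cc_Lx_Rx_slide (x y : C) k k' (c c' : C) (g : hom c c')
    (p : Lx C x k c) (q : Rx C y c' k') :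
  cc (Lx C x) (Rx C y) c' (p ;; g) q = cc (Lx C x) (Rx C y) c p (g ;; q).
Proof.
  pose proof (cc_slide (Lx C x) (Rx C y) k k' c c' g p q) as E. cbn in E.
  rewrite !act_id, comp_id_l, comp_id_r in E. exact E.
Qed.

Lemma eps_tamb_mor (x : C) : IsTambMor (Rx C x <o> Lx C x) (HomP C) (eps x).
Proof.
  split.
  - intros c c' d d' f g. apply coend_ind. intros n h k.
    rewrite pmap_cc by (apply IsProfunctor_Rx || apply IsProfunctor_Lx).
    rewrite !eps_cc. cbn. simpl_cat. reflexivity.
  - intros m c d. apply coend_ind. intros n h k.
    rewrite pstr_cc by (apply IsStrengthNat_Rx || apply IsStrengthNat_Lx).
    rewrite !eps_cc. cbn. rewrite act_hom_comp_r. simpl_cat.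
    rewrite <- (comp_assoc _ _ _ _ _ (aassoc_inv _ _ _)), aassoc_iso2. simpl_cat.
    reflexivity.
Qed.

Lemma eta_tamb_mor (x : C) : IsTambMor (HomP (selfAct M)) (Lx C x <o> Rx C x) (eta x).
Proof.
  split.
  - intros k0 k1 k2 k3 f g h. unfold eta.
    rewrite pmap_cc by (apply IsProfunctor_Rx || apply IsProfunctor_Lx).
    cbn. rewrite !act_hom_comp_l. simpl_cat.
    rewrite <- comp_assoc, cc_Lx_Rx_slide, comp_id_r. reflexivity.
  - intros m k k' h. unfold eta.
    rewrite pstr_cc by (apply IsStrengthNat_Rx || apply IsStrengthNat_Lx).
    cbn. rewrite act_id, comp_id_l, <- (comp_id_r _ _ _ (aassoc_inv m k' x)).
    rewrite <- cc_Lx_Rx_slide, comp_assoc, <- aassoc_inv_nat.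
    rewrite <- comp_assoc, aassoc_iso1, comp_id_l. reflexivity.
Qed.

Lemma triangle_Rx (x c : C) (n : M) (h : Rx C x c n) :
  lunitT (Rx C x) c n
    (whiskR (eps x) (Rx C x) c n
      (assocT_inv (Rx C x) (Lx C x) (Rx C x) c n
        (whiskL (Rx C x) (Q := HomP (selfAct M)) (Q' := Lx C x <o> Rx C x) (eta x) c n
          (runitT_inv (Rx C x) c n h)))) = h.
Proof.
  unfold runitT_inv.
  rewrite whiskL_cc by apply (proj1 (eta_tamb_mor x)). unfold eta.
  rewrite assocT_inv_cc by (apply IsProfunctor_Rx || apply IsProfunctor_Lx).
  rewrite whiskR_cc by apply (proj1 (eps_tamb_mor x)).
  rewrite eps_cc, lunitT_cc by apply IsProfunctor_Rx.
  cbn. simpl_cat. reflexivity.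
Qed.

Lemma triangle_Lx (x : C) (n : M) (c : C) (h : Lx C x n c) :
  runitT (Lx C x) n c
    (whiskL (Lx C x) (eps x) n c
      (assocT (Lx C x) (Rx C x) (Lx C x) n c
        (whiskR (P := HomP (selfAct M)) (P' := Lx C x <o> Rx C x) (eta x) (Lx C x) n c
          (lunitT_inv (Lx C x) n c h)))) = h.
Proof.
  unfold lunitT_inv.
  rewrite whiskR_cc by apply (proj1 (eta_tamb_mor x)). unfold eta.
  rewrite assocT_cc by (apply IsProfunctor_Rx || apply IsProfunctor_Lx).
  rewrite whiskL_cc by apply (proj1 (eps_tamb_mor x)).
  rewrite eps_cc, runitT_cc by apply IsProfunctor_Lx.
  cbn. simpl_cat. reflexivity.
Qed.

Lemma Rf_natural {x y : C} (f : hom x y) (c c' : C) (n n' : M) (g : hom c' c) (u : hom n n')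
    (h : Rx C x c n) :
  Rf C f c' n' (pmap (Rx C x) g u h) = pmap (Rx C y) g u (Rf C f c n h).
Proof. unfold Rf. cbn. simpl_cat. rewrite act_hom_interchange. reflexivity. Qed.

Lemma Lf_natural {x y : C} (f : hom x y) (n n' : M) (c c' : C) (u : hom n' n) (g : hom c c')
    (h : Lx C y n c) :
  Lf C f n' c' (pmap (Lx C y) u g h) = pmap (Lx C x) u g (Lf C f n c h).
Proof. unfold Lf. cbn. simpl_cat. rewrite <- !comp_assoc, act_hom_interchange. reflexivity. Qed.

Lemma eps_dinatural (x y : C) (f : hom x y) (c c' : C) (z : (Rx C x <o> Lx C y) c c') :
  eps y c c' (whiskR (Rf C f) (Lx C y) c c' z) = eps x c c' (whiskL (Rx C x) (Lf C f) c c' z).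
Proof.
  revert z. apply coend_ind. intros n h k.
  rewrite whiskR_cc by apply Rf_natural. rewrite whiskL_cc by apply Lf_natural.
  rewrite !eps_cc. unfold Rf, Lf. simpl_cat. reflexivity.
Qed.

Lemma eta_dinatural (x y : C) (f : hom x y) (k k' : M) (h : hom k k') :
  whiskL (Lx C x) (Rf C f) k k' (eta x k k' h) = whiskR (Lf C f) (Rx C y) k k' (eta y k k' h).
Proof.
  unfold eta. rewrite whiskL_cc by apply Rf_natural. rewrite whiskR_cc by apply Lf_natural.
  unfold Rf, Lf. cbn [acat selfAct].
  rewrite <- act_hom_interchange, cc_Lx_Rx_slide, comp_id_l, comp_id_r.
  reflexivity.
Qed.
End TambaraAdjunction.

Theorem mainTheorem2 (M : MonCat) (C : ActData M) (HC : ActCoherent C) :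
  exists (eps : forall (x : C) (c c' : C), (Rx C x <o> Lx C x) c c' -> HomP C c c')
         (eta : forall (x : C) (k k' : M), HomP (selfAct M) k k' -> (Lx C x <o> Rx C x) k k'),
    (* ε_x is given by composition  ∫^n C(c, n⊙x) × C(n⊙x, c') → C(c,c') *)
    (forall (x c c' : C) (n : M) (h : hom c (act n x)) (k : hom (act n x) c'),
        eps x c c' (cc (Rx C x) (Lx C x) n h k) = h ;; k) /\
    (* η_x is given by  h ↦ h⊙x ∈ C(k⊙x, k'⊙x) ≅ ∫^c C(k⊙x, c) × C(c, k'⊙x) *)
    (forall (x : C) (k k' : M) (h : hom k k'),
        eta x k k' h
        = cc (Lx C x) (Rx C x) (act k' x) (act_hom h (cid x)) (cid (act k' x))) /\
    (* they are morphisms of Tambara modules *)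
    (forall x : C, IsTambMor (Rx C x <o> Lx C x) (HomP C) (eps x)) /\
    (forall x : C, IsTambMor (HomP (selfAct M)) (Lx C x <o> Rx C x) (eta x)) /\
    (* triangle identities *)
    (forall (x c : C) (n : M) (h : Rx C x c n),
        lunitT (Rx C x) c n
          (whiskR (eps x) (Rx C x) c n
            (assocT_inv (Rx C x) (Lx C x) (Rx C x) c n
              (whiskL (Rx C x) (Q := HomP (selfAct M)) (Q' := Lx C x <o> Rx C x) (eta x) c n
                (runitT_inv (Rx C x) c n h)))) = h) /\
    (forall (x : C) (n : M) (c : C) (h : Lx C x n c),
        runitT (Lx C x) n c
          (whiskL (Lx C x) (eps x) n c
            (assocT (Lx C x) (Rx C x) (Lx C x) n c
              (whiskR (P := HomP (selfAct M)) (P' := Lx C x <o> Rx C x) (eta x) (Lx C x) n c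
                (lunitT_inv (Lx C x) n c h)))) = h) /\
    (* dinaturality in x *)
    (forall (x y : C) (f : hom x y) (c c' : C) (z : (Rx C x <o> Lx C y) c c'),
        eps y c c' (whiskR (Rf C f) (Lx C y) c c' z)
        = eps x c c' (whiskL (Rx C x) (Lf C f) c c' z)) /\
    (forall (x y : C) (f : hom x y) (k k' : M) (h : hom k k'),
        whiskL (Lx C x) (Rf C f) k k' (eta x k k' h)
        = whiskR (Lf C f) (Rx C y) k k' (eta y k k' h)).
Proof.
  exists (eps C), (eta C).
  split; [exact (eps_cc C)|].
  split; [reflexivity|].
  split; [exact (eps_tamb_mor C)|].
  split; [exact (eta_tamb_mor C)|].
  split; [exact (triangle_Rx C)|].
  split; [exact (triangle_Lx C)|].
  split; [exact (eps_dinatural C) | exact (eta_dinatural C)].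
Qed.
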